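(* Let $n>p\ge 1$, let $X\in\mathbb{R}^{n\times p}$ have rows $x_1^T,\dots,x_n^T$, let $Y=(y_1,\dots,y_n)^T\in\mathbb{R}^n$, and let $h$ be an integer with $p\le h<n$. Assume: (A1) $x_i\neq \pm x_j$ for all $i\neq j$, and $x_i\neq 0$ for all $i$; (A2) $r^2_{(h)}(\beta)>0$ for every $\beta\in\mathbb{R}^p$; (A3) for every $(\circ_1,\dots,\circ_{n-1})\in\{+,-\}^{n-1}$ the $(n-1)\times p$ matrix with rows $(x_1\circ_1 x_2)^T,\dots,(x_1\circ_{n-1}x_n)^T$ has rank $p$; (A4) $X$ has $h$-full rank, i.e. $X^T\mathrm{diag}(w)X$ is invertible for every $w\in Q^{(n,h)}$. Then the Borders Scanning Algorithm (BSA) described in the context terminates and its output $\hat\beta$ is a global minimizer of $OF(\beta)=\sum_{i=1}^h r^2_{(i)}(\beta)$ over $\beta\in\mathbb{R}^p$, i.e. $\hat\beta$ is the LTS estimate.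
   Context: For $\beta\in\mathbb{R}^p$, $r_i(\beta)=y_i-x_i^T\beta$ and $r^2_{(1)}(\beta)\le\dots\le r^2_{(n)}(\beta)$ are the squared residuals $r_1^2(\beta),\dots,r_n^2(\beta)$ sorted increasingly. $Q^{(n,h)}=\{w\in\{0,1\}^n: w^1+\dots+w^n=h\}$. For $w\in Q^{(n,h)}$, $W=\mathrm{diag}(w)$ and $J(w)=\|W(Y-X(X^TWX)^{-1}X^TWY)\|^2$. A pair $(\beta,w)\in\mathbb{R}^p\times Q^{(n,h)}$ is said to be in relation $Z$ if $\sum_{i=1}^h r^2_{(i)}(\beta)=\sum_{i=1}^n w^i r_i^2(\beta)$. For $a,b\in\mathbb{R}^k$ and $\circ\in\{+,-\}$, $a\circ b$ denotes $a+b$ or $a-b$. BSA: set $J_{\min}=+\infty$. For every $(p+1)$-element subset of $\{1,\dots,n\}$, with its elements listed (in a fixed order) as $i_1,\dots,i_{p+1}$, and for every $(\circ_1,\dots,\circ_p)\in\{+,-\}^p$: if the $p\times p$ linear system $(x_{i_1}\circ_j x_{i_{j+1}})^T\beta=y_{i_1}\circ_j y_{i_{j+1}}$, $j=1,\dots,p$, is regular, let $\beta_0$ be its unique solution; compute and sort the squared residuals at $\beta_0$; if $r^2_{i_1}(\beta_0)=r^2_{(h)}(\beta_0)=r^2_{(h+1)}(\beta_0)$, determine all $w\in Q^{(n,h)}$ with $(\beta_0,w)\in Z$, and for each such $w$, if $J(w)<J_{\min}$, set $J_{\min}=J(w)$ and $w_{\min}=w$. (Non-regular systems are skipped.) After all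 subsets and sign vectors are processed, output $\hat\beta=(X^TW_{\min}X)^{-1}X^TW_{\min}Y$ with $W_{\min}=\mathrm{diag}(w_{\min})$. *)

From HB Require Import structures.
From mathcomp Require Import all_boot all_order all_algebra.
From mathcomp Require Import reals.
Set Implicit Arguments. Unset Strict Implicit. Unset Printing Implicit Defensive.
Import Order.TTheory GRing.Theory Num.Theory.
Local Open Scope ring_scope.

Section LTS.
Variables (R : realType) (n p h : nat).
Variables (X : 'M[R]_(n, p)) (Y : 'cV[R]_n).

Definition resid (beta : 'cV[R]_p) (i : 'I_n) : R := Y i 0 - (X *m beta) i 0.

(* squared residuals sorted increasingly; r^2_(k) is the (k-1)-th entry (0-based) *)
Definition sorted_sq_res (beta : 'cV[R]_p) : seq R :=
  sort <=%R [seq (resid beta i) ^+ 2 | i <- enum 'I_n].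

Definition ord_sq_res (beta : 'cV[R]_p) (k : nat) : R :=
  nth 0 (sorted_sq_res beta) k.-1.

Definition OF (beta : 'cV[R]_p) : R := \sum_(1 <= k < h.+1) ord_sq_res beta k.

Definition inQ (w : {ffun 'I_n -> bool}) : bool := (\sum_i (w i : nat) == h)%N.

Definition Wmx (w : {ffun 'I_n -> bool}) : 'M[R]_n := diag_mx (\row_i (w i)%:R).

Definition beta_of (w : {ffun 'I_n -> bool}) : 'cV[R]_p :=
  invmx (X^T *m Wmx w *m X) *m (X^T *m Wmx w *m Y).

Definition sqnorm (v : 'cV[R]_n) : R := \sum_i (v i 0) ^+ 2.

Definition J (w : {ffun 'I_n -> bool}) : R :=
  sqnorm (Wmx w *m (Y - X *m beta_of w)).

Definition Zrel (beta : 'cV[R]_p) (w : {ffun 'I_n -> bool}) : bool :=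
  inQ w && (\sum_(1 <= k < h.+1) ord_sq_res beta k
             == \sum_i (w i)%:R * (resid beta i) ^+ 2).

(* a (p+1)-element subset of {1..n}, listed in increasing order i_1 < ... < i_{p+1}:
   f ord0 = i_1 and f (lift ord0 j) = i_{j+2} *)
Definition incr_tuple (f : {ffun 'I_p.+1 -> 'I_n}) : bool :=
  [forall a : 'I_p.+1, forall b : 'I_p.+1, (a < b)%N ==> (f a < f b)%N].

Definition sgnR (b : bool) : R := if b then 1 else -1.

Definition sys_mx (f : {ffun 'I_p.+1 -> 'I_n}) (s : {ffun 'I_p -> bool}) : 'M[R]_p :=
  \matrix_(j < p, c < p) (X (f ord0) c + sgnR (s j) * X (f (lift ord0 j)) c).

Definition sys_rhs (f : {ffun 'I_p.+1 -> 'I_n}) (s : {ffun 'I_p -> bool}) : 'cV[R]_p :=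
  \col_(j < p) (Y (f ord0) 0 + sgnR (s j) * Y (f (lift ord0 j)) 0).

(* state: None = (J_min = +oo, no w_min yet), Some w = current w_min *)
Definition bsa_update (st : option {ffun 'I_n -> bool}) (w : {ffun 'I_n -> bool}) :=
  match st with
  | None => Some w
  | Some wm => if J w < J wm then Some w else Some wm
  end.

Definition bsa_step (st : option {ffun 'I_n -> bool})
    (fs : {ffun 'I_p.+1 -> 'I_n} * {ffun 'I_p -> bool}) :=
  let: (f, s) := fs in
  let A := sys_mx f s in
  if A \in unitmx then
    let beta0 := invmx A *m sys_rhs f s in
    if ((resid beta0 (f ord0)) ^+ 2 == ord_sq_res beta0 h)
       && (ord_sq_res beta0 h == ord_sq_res beta0 h.+1) then
      foldl bsa_update st [seq w <- enum {ffun 'I_n -> bool} | Zrel beta0 w]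
    else st
  else st.

Definition bsa_items : seq ({ffun 'I_p.+1 -> 'I_n} * {ffun 'I_p -> bool}) :=
  [seq (f, s) | f <- [seq f <- enum {ffun 'I_p.+1 -> 'I_n} | incr_tuple f],
                s <- enum {ffun 'I_p -> bool}].

Definition bsa_wmin : option {ffun 'I_n -> bool} := foldl bsa_step None bsa_items.

Definition bsa_output : option 'cV[R]_p := omap beta_of bsa_wmin.

Definition A1 : Prop :=
  (forall i j : 'I_n, i != j -> row i X != row j X /\ row i X != - row j X) /\
  (forall i : 'I_n, row i X != 0).

Definition A2 : Prop := forall beta : 'cV[R]_p, 0 < ord_sq_res beta h.

(* rows (x_1 o_k x_{k+1})^T, k = 1..n-1; i0 is the index of x_1 *)
Definition A3 : Prop :=
  forall (i0 : 'I_n), val i0 = 0%N ->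
  forall s : {ffun 'I_n.-1 -> bool},
    \rank (\matrix_(k < n.-1, c < p)
             (X i0 c + sgnR (s k) * X (insubd i0 k.+1) c)) = p.

Definition A4 : Prop := forall w : {ffun 'I_n -> bool}, inQ w -> (X^T *m Wmx w *m X) \in unitmx.

End LTS.

From HB Require Import structures.
From mathcomp Require Import all_boot all_order all_algebra.
From mathcomp Require Import reals.
From mathcomp Require Import zify ring lra.
Set Implicit Arguments. Unset Strict Implicit. Unset Printing Implicit Defensive.
Import Order.TTheory GRing.Theory Num.Theory.
Local Open Scope ring_scope.

(* Let [ws] minimise [J] over [Q^(n,h)] and [beta1 := beta_of ws].  Since
   [OF beta] is the weighted sum of squares of any [w] in relation [Z] with
   [beta], and that sum is at least [J w], the minimum of [OF] is [J ws]; so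
   the support of [ws] carries [h] smallest squared residuals at [beta1].
   Keeping the signs of the outside residuals as at [beta1], the [beta] with
   this property form a polyhedron, which contains no line because
   [X^T W X] is invertible; hence it has a vertex [beta0].  There [p]
   independent constraints [r_a^2 = r_j^2] are tight, all at the level
   [r^2_(h) = r^2_(h+1)] (positive by (A2)), and they are spanned by rows
   [x_i1 +/- x_e] of one of the systems scanned by BSA, whose solution is
   [beta0].  So BSA examines [ws] and ends with [J w_min <= J ws], while
   [OF (beta_of w_min) <= J w_min]. *)

Lemma ler_sum_exchange (R : realDomainType) (I : finType) (f : I -> R)
    (A B : {set I}) : #|A| = #|B| ->
  (forall a b, a \in A :\: B -> b \in B :\: A -> f a <= f b) ->
  \sum_(i in A) f i <= \sum_(i in B) f i.
Proof.
move=> cardAB leAB.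
rewrite (big_setID B) [X in _ <= X](big_setID A) /= setIC lerD2l.
have cardD : #|A :\: B| = #|B :\: A|.
  move: (cardsID B A) (cardsID A B); rewrite setIC cardAB => <- /eqP.
  by rewrite eqn_add2l => /eqP.
have [AB0|[a0 a0AB]] := set_0Vmem (A :\: B).
  have BA0 : B :\: A = set0 by apply/eqP; rewrite -cards_eq0 -cardD AB0 cards0.
  by rewrite AB0 BA0 !big_set0.
have [am amAB am_max] : exists2 am, am \in A :\: B & forall i, i \in A :\: B -> f i <= f am.
  by case: (@arg_maxP _ _ _ a0 (mem (A :\: B)) f a0AB) => am ? ?; exists am.
apply: (@le_trans _ _ (\sum_(i in A :\: B) f am)); first exact: ler_sum.
by rewrite sumr_const cardD -sumr_const; apply: ler_sum => b bBA; apply: leAB.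
Qed.

Section OrderStatistics.
Variables (R : realDomainType) (n h : nat) (v : 'I_n -> R).
Hypotheses (h_lt_n : (h < n)%N) (h_gt0 : (0 < h)%N).

(* Counted from [1], as [r^2_(k)] in the paper. *)
Definition order_stat (k : nat) : R :=
  nth 0 (sort <=%R [seq v i | i <- enum 'I_n]) k.-1.

Definition ranking : seq 'I_n := sort (relpre v <=%R) (enum 'I_n).

Definition lowest : {set 'I_n} := [set i | i \in take h ranking].

Definition separates (W : {set 'I_n}) : Prop :=
  forall a b, a \in W -> b \notin W -> v a <= v b.

Let i0 : 'I_n := Ordinal (leq_ltn_trans (leq0n h) h_lt_n).

Lemma size_ranking : size ranking = n.
Proof. by rewrite size_sort size_enum_ord. Qed.

Lemma uniq_ranking : uniq ranking.
Proof. by rewrite sort_uniq enum_uniq. Qed.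

Lemma mem_ranking i : i \in ranking.
Proof. by rewrite mem_sort mem_enum. Qed.

Lemma ranking_le (k l : nat) : (k <= l < n)%N ->
  v (nth i0 ranking k) <= v (nth i0 ranking l).
Proof.
case/andP=> kl ln.
have sorted_rk : sorted (relpre v <=%R) ranking.
  by apply: sort_sorted => x y; exact: le_total.
have trans_rk : transitive (relpre v <=%R) by move=> x y z /=; exact: le_trans.
apply: (sorted_leq_nth trans_rk _ i0 sorted_rk) => //;
  rewrite ?inE ?size_ranking //; [by move=> x /= | exact: leq_ltn_trans kl ln].
Qed.

Lemma order_statE k : (k < n)%N -> order_stat k.+1 = v (nth i0 ranking k).
Proof.
by move=> kn; rewrite /order_stat sort_map (nth_map i0) // size_ranking.
Qed.

Lemma lowest_rank t : t \in lowest -> exists2 k, (k < h)%N & t = nth i0 ranking k.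
Proof.
rewrite inE => tl; set s := take h ranking.
have sz : size s = h by rewrite size_take size_ranking h_lt_n.
have lt : (index t s < h)%N by rewrite -sz index_mem.
by exists (index t s) => //; rewrite -(nth_take _ lt) nth_index.
Qed.

Lemma notin_lowest_rank b : b \notin lowest ->
  exists2 k, (h <= k < n)%N & b = nth i0 ranking k.
Proof.
rewrite inE => bl; exists (index b ranking); last by rewrite nth_index ?mem_ranking.
rewrite -[X in (_ < X)%N]size_ranking index_mem mem_ranking andbT leqNgt.
apply: contra bl => lt.
rewrite -(nth_index i0 (mem_ranking b)) -(nth_take _ lt) mem_nth //.
by rewrite size_take size_ranking h_lt_n.
Qed.

Lemma lowest_le t : t \in lowest -> v t <= v (nth i0 ranking h.-1).
Proof.
case/lowest_rank=> k kh ->; apply: ranking_le.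
by rewrite (leq_ltn_trans (leq_pred h) h_lt_n) andbT -ltnS prednK.
Qed.

Lemma notin_lowest_ge b : b \notin lowest -> v (nth i0 ranking h) <= v b.
Proof. by case/notin_lowest_rank=> k hkn ->; apply: ranking_le. Qed.

Lemma lowest_separates : separates lowest.
Proof.
move=> t b tl bl; apply: le_trans (lowest_le tl) (le_trans _ (notin_lowest_ge bl)).
by apply: ranking_le; rewrite leq_pred h_lt_n.
Qed.

Lemma card_lowest : #|lowest| = h.
Proof.
rewrite cardsE; move/card_uniqP: (take_uniq h uniq_ranking) => ->.
by rewrite size_take size_ranking h_lt_n.
Qed.

Lemma sum_order_stat_lowest :
  \sum_(1 <= k < h.+1) order_stat k = \sum_(i in lowest) v i.
Proof.
rewrite big_add1 /= (@eq_big_nat _ _ _ 0 h _ (fun k => v (nth i0 ranking k))); last first.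
  by move=> k /andP[_ kh]; rewrite order_statE // (ltn_trans kh).
rewrite (eq_bigl (fun i : 'I_n => i \in take h ranking)); last by move=> i; rewrite inE.
rewrite -big_uniq; last exact: take_uniq uniq_ranking.
rewrite (big_nth i0) size_take size_ranking h_lt_n.
by apply: eq_big_nat => k /andP[_ kh]; rewrite nth_take.
Qed.

Lemma sum_order_stat_le (W : {set 'I_n}) : #|W| = h ->
  \sum_(1 <= k < h.+1) order_stat k <= \sum_(i in W) v i.
Proof.
move=> cardW; rewrite sum_order_stat_lowest; apply: ler_sum_exchange.
  by rewrite card_lowest cardW.
by move=> a b /setDP[al _] /setDP[_ bl]; exact: lowest_separates.
Qed.

Lemma sum_order_stat_eq (W : {set 'I_n}) : #|W| = h -> separates W ->
  \sum_(1 <= k < h.+1) order_stat k = \sum_(i in W) v i.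
Proof.
move=> cardW sepW; apply/eqP; rewrite eq_le sum_order_stat_le //=.
rewrite sum_order_stat_lowest; apply: ler_sum_exchange; first by rewrite card_lowest cardW.
by move=> a b /setDP[aW _] /setDP[_ bW]; exact: sepW.
Qed.

Lemma order_stat_tie (W : {set 'I_n}) a j : #|W| = h -> separates W ->
  a \in W -> j \notin W -> v a = v j ->
  order_stat h = v a /\ order_stat h.+1 = v a.
Proof.
move=> cardW sepW aW jW eq_aj; set m := v a.
have -> : order_stat h = v (nth i0 ranking h.-1).
  by rewrite -{1}(prednK h_gt0) order_statE // (leq_ltn_trans (leq_pred h)).
rewrite order_statE //.
have le_m_h : m <= v (nth i0 ranking h.-1).
  rewrite leNgt; apply/negP => lt_h.
  have sub : lowest \subset W :\ a.
    apply/subsetP => t tl; have lt_t := le_lt_trans (lowest_le tl) lt_h.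
    rewrite !inE; apply/andP; split; first by apply: contraTneq lt_t => ->; rewrite ltxx.
    by apply: contraTT lt_t => tW; rewrite -leNgt (sepW _ _ aW tW).
  move: (subset_leq_card sub); rewrite card_lowest.
  by have := cardsD1 a W; rewrite aW cardW /=; lia.
have le_h1_m : v (nth i0 ranking h) <= m.
  rewrite leNgt; apply/negP => lt_h.
  have sub : ~: lowest \subset ~: W :\ j.
    apply/subsetP => t; rewrite in_setC => tl.
    have lt_t := lt_le_trans lt_h (notin_lowest_ge tl).
    rewrite !inE; apply/andP; split; first by apply: contraTneq lt_t => ->; rewrite -eq_aj ltxx.
    by apply: contraTN lt_t => tW; rewrite -leNgt /m eq_aj (sepW _ _ tW jW).
  move: (subset_leq_card sub).
  have := cardsC lowest; have := cardsC W; rewrite card_lowest cardW card_ord.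
  by have := cardsD1 j (~: W); rewrite inE jW /=; lia.
have le_mid : v (nth i0 ranking h.-1) <= v (nth i0 ranking h).
  by apply: ranking_le; rewrite leq_pred h_lt_n.
split; apply/eqP; rewrite eq_le.
- by rewrite le_m_h andbT (le_trans le_mid le_h1_m).
- by rewrite le_h1_m (le_trans le_m_h le_mid).
Qed.

End OrderStatistics.

Section Objective.
Variables (R : realType) (n p h : nat) (X : 'M[R]_(n, p)) (Y : 'cV[R]_n).
Local Notation wT := {ffun 'I_n -> bool}.

Definition sq_res (beta : 'cV[R]_p) (i : 'I_n) : R := resid X Y beta i ^+ 2.

Definition supp (w : wT) : {set 'I_n} := [set i | w i].

Lemma inQE (w : wT) : inQ h w = (#|supp w| == h).
Proof.
rewrite /inQ -sum1_card [in RHS]big_mkcond /=.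
suff -> : (\sum_i (w i : nat) = \sum_i if i \in supp w then 1 else 0)%N by [].
by apply: eq_bigr => i _; rewrite inE; case: (w i).
Qed.

Lemma weighted_sumE (w : wT) beta :
  \sum_i (w i)%:R * resid X Y beta i ^+ 2 = \sum_(i in supp w) sq_res beta i.
Proof.
rewrite [RHS]big_mkcond; apply: eq_bigr => i _; rewrite inE.
by case: (w i); rewrite ?mul1r ?mul0r.
Qed.

Lemma OFE beta : OF h X Y beta = \sum_(1 <= k < h.+1) order_stat (sq_res beta) k.
Proof. by []. Qed.

Lemma ord_sq_resE beta k : ord_sq_res X Y beta k = order_stat (sq_res beta) k.
Proof. by []. Qed.

Lemma ZrelE beta (w : wT) :
  Zrel h X Y beta w = inQ h w && (OF h X Y beta == \sum_(i in supp w) sq_res beta i).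
Proof. by rewrite /Zrel weighted_sumE. Qed.

Hypotheses (h_lt_n : (h < n)%N) (h_gt0 : (0 < h)%N).

Lemma inQ_in_out (w : wT) : inQ h w -> (exists a, w a) /\ (exists j, ~~ w j).
Proof.
rewrite inQE => /eqP cardw; split.
  have /card_gt0P[a] : (0 < #|supp w|)%N by rewrite cardw.
  by rewrite inE => wa; exists a.
have /card_gt0P[j] : (0 < #|~: supp w|)%N.
  by have := cardsC (supp w); rewrite cardw card_ord; lia.
by rewrite !inE => wj; exists j.
Qed.

Lemma OF_le_supp (w : wT) beta : inQ h w -> OF h X Y beta <= \sum_(i in supp w) sq_res beta i.
Proof. by rewrite inQE => /eqP cardw; rewrite OFE; apply: sum_order_stat_le. Qed.

Lemma Zrel_separates (w : wT) beta : inQ h w -> separates (sq_res beta) (supp w) ->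
  Zrel h X Y beta w.
Proof.
move=> wQ sep; rewrite ZrelE wQ OFE; move: wQ; rewrite inQE => /eqP cardw.
by rewrite (sum_order_stat_eq h_lt_n h_gt0 cardw sep) eqxx.
Qed.

Lemma exists_Zrel beta : exists w, Zrel h X Y beta w.
Proof.
set L := lowest h (sq_res beta); exists [ffun i => i \in L].
have suppL : supp [ffun i => i \in L] = L by apply/setP => i; rewrite inE ffunE.
apply: Zrel_separates; rewrite ?inQE suppL ?card_lowest //.
exact: lowest_separates.
Qed.

End Objective.

Section WeightedLeastSquares.
Variables (R : realType) (n p : nat) (X : 'M[R]_(n, p)) (Y : 'cV[R]_n).
Variable w : {ffun 'I_n -> bool}.
Local Notation W := (Wmx R w).

Lemma Wmx_mulE (v : 'cV[R]_n) i : (W *m v) i 0 = (w i)%:R * v i 0.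
Proof. by rewrite /Wmx mul_diag_mx !mxE. Qed.

Lemma residE beta i : resid X Y beta i = (Y - X *m beta) i 0.
Proof. by rewrite /resid !mxE. Qed.

Lemma JE : J X Y w = \sum_(i in supp w) sq_res X Y (beta_of X Y w) i.
Proof.
rewrite /J /sqnorm -weighted_sumE; apply: eq_bigr => i _.
by rewrite Wmx_mulE residE exprMn; case: (w i); rewrite ?expr1n ?expr0n.
Qed.

Lemma beta_of_normal : X^T *m W *m X \in unitmx ->
  X^T *m W *m (Y - X *m beta_of X Y w) = 0.
Proof.
move=> unitM; rewrite mulmxBr [X^T *m W *m (X *m _)]mulmxA.
by rewrite /beta_of mulKVmx // subrr.
Qed.

(* Pythagoras: by the normal equations the fitted residual is [W]-orthogonal
   to every [X d], so moving away from [beta_of w] can only add [|X d|^2]. *)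
Lemma J_le_supp beta : X^T *m W *m X \in unitmx ->
  J X Y w <= \sum_(i in supp w) sq_res X Y beta i.
Proof.
move=> unitM; rewrite JE -!weighted_sumE.
set e := Y - X *m beta_of X Y w; set d := beta - beta_of X Y w.
have orth c : \sum_i X i c * ((w i)%:R * e i 0) = 0.
  have entry0 : (X^T *m (W *m e)) c 0 = 0 by rewrite mulmxA beta_of_normal // mxE.
  rewrite -[RHS]entry0 mxE; apply: eq_bigr => i _.
  by rewrite Wmx_mulE [X^T c i]mxE.
have cross : \sum_i (w i)%:R * (e i 0 * (X *m d) i 0) = 0.
  under eq_bigr => i _ do rewrite [(X *m d) i 0]mxE mulr_sumr mulr_sumr.
  rewrite exchange_big big1 //= => c _.
  transitivity (d c 0 * \sum_i X i c * ((w i)%:R * e i 0)); last by rewrite orth mulr0.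
  by rewrite mulr_sumr; apply: eq_bigr => i _; ring.
have residB i : resid X Y beta i = e i 0 - (X *m d) i 0.
  by rewrite residE /e /d mulmxBr !mxE; ring.
have -> : \sum_i (w i)%:R * resid X Y beta i ^+ 2 =
    \sum_i (w i)%:R * e i 0 ^+ 2 - 2 * \sum_i (w i)%:R * (e i 0 * (X *m d) i 0)
    + \sum_i (w i)%:R * (X *m d) i 0 ^+ 2.
  rewrite mulr_sumr -sumrN -!big_split /=.
  by apply: eq_bigr => i _; rewrite residB; ring.
rewrite cross mulr0 subr0 -[X in X <= _]addr0.
under [X in X + 0]eq_bigr => i _ do rewrite residE -/e.
rewrite lerD2l; apply: sumr_ge0 => i _.
by apply: mulr_ge0; rewrite ?ler0n ?sqr_ge0.
Qed.

End WeightedLeastSquares.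

Section ObjectiveVersusJ.
Variables (R : realType) (n p h : nat) (X : 'M[R]_(n, p)) (Y : 'cV[R]_n).
Hypotheses (h_lt_n : (h < n)%N) (h_gt0 : (0 < h)%N).
Local Notation wT := {ffun 'I_n -> bool}.

Lemma OF_beta_of_le_J (w : wT) : inQ h w -> OF h X Y (beta_of X Y w) <= J X Y w.
Proof. by move=> wQ; rewrite JE; apply: OF_le_supp. Qed.

Hypothesis fullX : A4 h X.

Lemma exists_J_le_OF beta : exists2 w : wT, inQ h w & J X Y w <= OF h X Y beta.
Proof.
have [w] := exists_Zrel X Y h_lt_n h_gt0 beta.
rewrite ZrelE => /andP[wQ /eqP ->]; exists w => //.
by apply: J_le_supp; apply: fullX.
Qed.

Lemma exists_J_argmin :
  exists2 ws : wT, inQ h ws & forall w, inQ h w -> J X Y ws <= J X Y w.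
Proof.
have [w0] := exists_Zrel X Y h_lt_n h_gt0 0; rewrite ZrelE => /andP[w0Q _].
by case: (@arg_minP _ _ _ w0 (inQ h) (J X Y) w0Q) => ws wsQ ws_min; exists ws.
Qed.

(* [OF] at [beta_of ws] equals [J ws], the least value of [OF], so swapping one
   observation of the support for an outside one cannot lower the sum. *)
Lemma J_argmin_separates (ws : wT) : inQ h ws ->
  (forall w, inQ h w -> J X Y ws <= J X Y w) ->
  separates (sq_res X Y (beta_of X Y ws)) (supp ws).
Proof.
move=> wsQ ws_min; set beta1 := beta_of X Y ws; set v := sq_res X Y beta1.
have cardws : #|supp ws| = h by apply/eqP; rewrite -inQE.
have OF1 : OF h X Y beta1 = \sum_(i in supp ws) v i.
  apply/eqP; rewrite eq_le OF_le_supp //= -JE.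
  by have [w wQ] := exists_J_le_OF beta1; apply: le_trans (ws_min w wQ).
move=> a b aS bS; rewrite leNgt; apply/negP => lt_ba.
have bD : b \notin supp ws :\ a by rewrite in_setD1 (negbTE bS) andbF.
have card_swap : #|b |: (supp ws :\ a)| = h.
  by rewrite cardsU1 bD; have := cardsD1 a (supp ws); rewrite aS cardws /= => ->.
have := sum_order_stat_le v h_lt_n h_gt0 card_swap.
rewrite -OFE OF1 (big_setD1 a aS) big_setU1 //= lerD2r.
by rewrite leNgt lt_ba.
Qed.

End ObjectiveVersusJ.

Section AlgorithmState.
Variables (R : realType) (n p h : nat) (X : 'M[R]_(n, p)) (Y : 'cV[R]_n).
Local Notation wT := {ffun 'I_n -> bool}.

Definition state_inQ (st : option wT) : bool :=
  if st is Some wm then inQ h wm else true.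

Definition state_le (st : option wT) (c : wT) : bool :=
  if st is Some wm then J X Y wm <= J X Y c else false.

Lemma bsa_update_inQ st (w : wT) :
  state_inQ st -> inQ h w -> state_inQ (bsa_update X Y st w).
Proof. by case: st => [wm|] //= wmQ wQ; case: ifP. Qed.

Lemma bsa_update_le st (w c : wT) :
  state_le st c || (w == c) -> state_le (bsa_update X Y st w) c.
Proof.
case: st => [wm|] /=; last by move=> /eqP ->; exact: lexx.
case: ifP => lt_wm /orP[le_wm|/eqP eq_wc] /=.
- exact: le_trans (ltW lt_wm) le_wm.
- by rewrite -eq_wc lexx.
- exact: le_wm.
- by rewrite -eq_wc leNgt lt_wm.
Qed.

Lemma foldl_update_inQ st (ws : seq wT) :
  state_inQ st -> all (inQ h) ws -> state_inQ (foldl (bsa_update X Y) st ws).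
Proof.
elim: ws st => [|w ws IH] st //= stQ /andP[wQ wsQ].
by apply: IH => //; apply: bsa_update_inQ.
Qed.

Lemma foldl_update_le st (ws : seq wT) c :
  state_le st c || (c \in ws) -> state_le (foldl (bsa_update X Y) st ws) c.
Proof.
elim: ws st => [|w ws IH] st; first by rewrite orbF.
rewrite in_cons => /orP[le_st|/orP[/eqP eq_cw|cws]]; apply: IH.
- by rewrite bsa_update_le ?le_st.
- by rewrite bsa_update_le ?eq_cw ?eqxx ?orbT.
- by rewrite cws orbT.
Qed.

Lemma bsa_step_inQ st it : state_inQ st -> state_inQ (bsa_step h X Y st it).
Proof.
case: it => f s stQ; rewrite /bsa_step; case: ifP => // _; case: ifP => // _.
apply: foldl_update_inQ => //; apply/allP => w.
by rewrite mem_filter /Zrel => /andP[/andP[]].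
Qed.

Lemma bsa_step_le st it c : state_le st c -> state_le (bsa_step h X Y st it) c.
Proof.
case: it => f s le_st; rewrite /bsa_step; case: ifP => // _; case: ifP => // _.
by apply: foldl_update_le; rewrite le_st.
Qed.

Lemma bsa_step_visit st f s beta0 c :
  sys_mx X f s \in unitmx -> invmx (sys_mx X f s) *m sys_rhs Y f s = beta0 ->
  sq_res X Y beta0 (f ord0) = ord_sq_res X Y beta0 h ->
  ord_sq_res X Y beta0 h = ord_sq_res X Y beta0 h.+1 ->
  Zrel h X Y beta0 c -> state_le (bsa_step h X Y st (f, s)) c.
Proof.
move=> unit_sys sol sq_h sq_h1 Zc; rewrite /bsa_step unit_sys sol.
rewrite -/(sq_res X Y beta0 (f ord0)) sq_h sq_h1 !eqxx.
by apply: foldl_update_le; rewrite mem_filter Zc mem_enum orbT.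
Qed.

Lemma foldl_step_inQ st its :
  state_inQ st -> state_inQ (foldl (bsa_step h X Y) st its).
Proof. by elim: its st => [|it its IH] st // stQ; apply/IH/bsa_step_inQ. Qed.

Lemma foldl_step_le st its it c : it \in its ->
  (forall st, state_le (bsa_step h X Y st it) c) ->
  state_le (foldl (bsa_step h X Y) st its) c.
Proof.
have foldl_le st' its' : state_le st' c -> state_le (foldl (bsa_step h X Y) st' its') c.
  by elim: its' st' => [|it' its' IH] st' // le_st; apply/IH/bsa_step_le.
elim: its st => [|it' its IH] st //; rewrite in_cons => /orP[/eqP <-|itits] visit.
  exact: (foldl_le (bsa_step h X Y st it) its (visit st)).
exact: (IH (bsa_step h X Y st it') itits visit).
Qed.

Lemma bsa_wmin_le c :
  (exists2 it, it \in bsa_items n p & forall st, state_le (bsa_step h X Y st it) c) ->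
  exists wm, [/\ bsa_wmin h X Y = Some wm, inQ h wm & J X Y wm <= J X Y c].
Proof.
case=> it it_in visit; rewrite /bsa_wmin.
have := foldl_step_inQ (bsa_items n p) (isT : state_inQ None).
have := foldl_step_le None it_in visit.
by case: foldl => [wm|] // le_wm wmQ; exists wm.
Qed.

End AlgorithmState.

Lemma resid_shift (R : realType) n p (X : 'M[R]_(n, p)) (Y : 'cV[R]_n) beta d t i :
  resid X Y (beta + t *: d) i = resid X Y beta i - t * (X *m d) i 0.
Proof. by rewrite /resid mulmxDr -scalemxAr !mxE; ring. Qed.

Lemma row_mulE (R : pzRingType) n p (X : 'M[R]_(n, p)) i (d : 'cV[R]_p) :
  (row i X *m d) 0 0 = (X *m d) i 0.
Proof. by rewrite -row_mul mxE. Qed.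

Section SeparatingPolyhedron.
Variables (R : realType) (n p : nat) (X : 'M[R]_(n, p)) (Y : 'cV[R]_n).
Variables (w : {ffun 'I_n -> bool}) (eps : 'I_n -> R).
Hypothesis eps_sign : forall j, eps j = 1 \/ eps j = -1.
Local Notation r := (resid X Y).

(* The constraint [(a, j, s)] with [a] in and [j] out of the support reads
   [eps j * r j - (+/-) r a >= 0]; with [eps j] the sign of [r j] the two signs
   [s] together say [r a ^ 2 <= r j ^ 2].  Other triples encode [1 >= 0]. *)
Definition constraint := ('I_n * 'I_n * bool)%type.

Definition active (k : constraint) : bool := w k.1.1 && ~~ w k.1.2.

Definition normal_row (k : constraint) : 'rV[R]_p :=
  if active k then eps k.1.2 *: row k.1.2 X - sgnR R k.2 *: row k.1.1 X else 0.

Definition slack (k : constraint) (beta : 'cV[R]_p) : R :=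
  if active k then eps k.1.2 * r beta k.1.2 - sgnR R k.2 * r beta k.1.1 else 1.

Definition feasible (beta : 'cV[R]_p) : Prop := forall k, 0 <= slack k beta.

Definition tight (beta : 'cV[R]_p) (k : constraint) : bool := slack k beta == 0.

Definition tight_mx (beta : 'cV[R]_p) : 'M[R]_(#|{: constraint}|, p) :=
  \matrix_(i, c) (if tight beta (enum_val i) then normal_row (enum_val i) 0 c else 0).

Lemma row_tight_mx beta i :
  row i (tight_mx beta) = if tight beta (enum_val i) then normal_row (enum_val i) else 0.
Proof. by apply/rowP => c; rewrite !mxE; case: ifP; rewrite ?mxE. Qed.

Lemma normal_row_mulE k (d : 'cV[R]_p) : (normal_row k *m d) 0 0 =
  if active k then eps k.1.2 * (X *m d) k.1.2 0 - sgnR R k.2 * (X *m d) k.1.1 0 else 0.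
Proof.
rewrite /normal_row; case: ifP => _; last by rewrite mul0mx mxE.
rewrite mulmxBl -!scalemxAl -(row_mulE X k.1.2 d) -(row_mulE X k.1.1 d).
by move: (row k.1.2 X *m d) (row k.1.1 X *m d) => A B; rewrite !mxE.
Qed.

Lemma slack_shift k beta d t :
  slack k (beta + t *: d) = slack k beta - t * (normal_row k *m d) 0 0.
Proof.
rewrite normal_row_mulE /slack; case: ifP => _; last by rewrite mulr0 subr0.
by rewrite !resid_shift; ring.
Qed.

Lemma tight_active beta k : tight beta k -> active k.
Proof. by rewrite /tight /slack; case: ifP => // _; rewrite oner_eq0. Qed.

Lemma tight_normal_sub beta k : tight beta k -> (normal_row k <= tight_mx beta)%MS.
Proof.
by move=> tk; have := row_sub (enum_rank k) (tight_mx beta); rewrite row_tight_mx enum_rankK tk.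
Qed.

Lemma tight_normal_mul0 beta k (d : 'cV[R]_p) :
  tight_mx beta *m d = 0 -> tight beta k -> normal_row k *m d = 0.
Proof.
move=> Td0 tk; have := congr1 (row (enum_rank k)) Td0.
by rewrite row_mul row_tight_mx enum_rankK tk row0.
Qed.

Lemma tight_mx_sub beta beta' : (forall k, tight beta k -> tight beta' k) ->
  (tight_mx beta <= tight_mx beta')%MS.
Proof.
move=> tight_tight'; apply/row_subP => i; rewrite row_tight_mx.
by case: ifP => [/tight_tight'/tight_normal_sub|_]; rewrite ?sub0mx.
Qed.

Lemma exists_tight beta : (0 < \rank (tight_mx beta))%N -> exists k, tight beta k.
Proof.
move=> rank_gt0; apply/existsP; apply: contraTT rank_gt0.
rewrite negb_exists => /forallP untight; suff -> : tight_mx beta = 0 by rewrite mxrank0.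
by apply/row_matrixP => i; rewrite row_tight_mx row0 (negbTE (untight _)).
Qed.

Lemma tight_sq_res beta k : tight beta k -> sq_res X Y beta k.1.1 = sq_res X Y beta k.1.2.
Proof.
move=> tk; move: (tk); rewrite /tight /slack (tight_active tk) /sq_res => /eqP.
by case: (eps_sign k.1.2) => ->; case: k.2; rewrite /sgnR => ?; nra.
Qed.

Lemma feasible_separates beta : feasible beta -> separates (sq_res X Y beta) (supp w).
Proof.
move=> feas a b; rewrite !inE => wa wb.
have := feas (a, b, true); have := feas (a, b, false).
rewrite /slack /active /= wa wb /= /sq_res.
by case: (eps_sign b) => ->; rewrite /sgnR /= => ? ?; nra.
Qed.

Lemma tight_same_level beta k k' : feasible beta -> tight beta k -> tight beta k' ->
  sq_res X Y beta k.1.1 = sq_res X Y beta k'.1.1.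
Proof.
move=> feas tk tk'; have sep := feasible_separates feas.
have /andP[wa wj] := tight_active tk; have /andP[wa' wj'] := tight_active tk'.
have le1 : sq_res X Y beta k.1.1 <= sq_res X Y beta k'.1.1.
  by rewrite (tight_sq_res tk'); apply: sep; rewrite inE.
have le2 : sq_res X Y beta k'.1.1 <= sq_res X Y beta k.1.1.
  by rewrite (tight_sq_res tk); apply: sep; rewrite inE.
by apply/eqP; rewrite eq_le le1 le2.
Qed.

Lemma feasible_at beta : (forall j, eps j = if 0 <= r beta j then 1 else -1) ->
  separates (sq_res X Y beta) (supp w) -> feasible beta.
Proof.
move=> epsE sep k; rewrite /slack; case: ifP => [/andP[wa wj]|_]; last exact: ler01.
have := sep k.1.1 k.1.2; rewrite !inE wa wj => /(_ isT isT).
by rewrite /sq_res epsE; case: ifP; case: k.2; rewrite /sgnR => ? ?; nra.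
Qed.

Hypotheses (w_nonempty : exists a, w a) (w_proper : exists j, ~~ w j).
Hypothesis fullW : X^T *m Wmx R w *m X \in unitmx.

(* The polyhedron contains no line: a direction orthogonal to every normal
   leaves all residuals unchanged, hence lies in the kernel of [X^T W X]. *)
Lemma normal_rows_pointed (d : 'cV[R]_p) : d != 0 ->
  exists k, (normal_row k *m d) 0 0 != 0.
Proof.
move=> d_neq0; apply/existsP; apply: contraNT d_neq0; rewrite negb_exists => /forallP dperp.
have Xd0 a j : w a -> ~~ w j -> (X *m d) a 0 = 0 /\ (X *m d) j 0 = 0.
  move=> wa wj; have := dperp (a, j, true); have := dperp (a, j, false).
  rewrite !normal_row_mulE /active /= wa wj /sgnR !negbK => /eqP e1 /eqP e2.
  by case: (eps_sign j) => epsj; rewrite epsj in e1 e2; split; lra.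
have Xd : X *m d = 0.
  apply/matrixP => i c; rewrite ord1 [RHS]mxE.
  case wi: (w i); first by have [j wj] := w_proper; case: (Xd0 i j wi wj).
  by have [a wa] := w_nonempty; case: (Xd0 a i wa (negbT wi)).
have Md : X^T *m Wmx R w *m X *m d = 0 by rewrite -mulmxA Xd mulmx0.
by apply/eqP; rewrite -(mulKmx fullW d) Md mulmx0.
Qed.

Lemma exists_increasing_dir beta : (\rank (tight_mx beta) < p)%N ->
  exists2 d : 'cV[R]_p, tight_mx beta *m d = 0 & exists k, 0 < (normal_row k *m d) 0 0.
Proof.
move=> rank_lt; set A := (tight_mx beta)^T.
have [i ker_i] : exists i, row i (kermx A) != 0.
  have : ~~ row_free A by rewrite /row_free mxrank_tr neq_ltn rank_lt.
  rewrite -kermx_eq0 => ker_neq0; apply/existsP; apply: contraNT ker_neq0.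
  rewrite negb_exists => /forallP ker0; apply/eqP/row_matrixP => i.
  by rewrite row0; apply/eqP/negbNE/ker0.
set d := (row i (kermx A))^T.
have d_neq0 : d != 0 by rewrite /d -[0]trmx0 (inj_eq (@trmx_inj _ _ _)).
have Td : tight_mx beta *m d = 0.
  by rewrite /d -[tight_mx beta]trmxK -trmx_mul -row_mul mulmx_ker row0 trmx0.
have [k dk] := normal_rows_pointed d_neq0.
have [q_gt0|q_le0] := ltP 0 ((normal_row k *m d) 0 0); first by exists d => //; exists k.
exists (- d); first by rewrite mulmxN Td oppr0.
by exists k; rewrite mulmxN mxE oppr_gt0 lt_neqAle dk q_le0.
Qed.

(* Moving along such a direction until the first new constraint becomes tight
   keeps all tight constraints tight and adds an independent normal. *)
Lemma feasible_rank_step beta : feasible beta -> (\rank (tight_mx beta) < p)%N ->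
  exists2 beta', feasible beta' & (\rank (tight_mx beta) < \rank (tight_mx beta'))%N.
Proof.
move=> feas rank_lt; have [d Td [k1 qk1]] := exists_increasing_dir rank_lt.
pose q k := (normal_row k *m d) 0 0.
have [km qkm km_min] : exists2 km, 0 < q km &
    forall k, 0 < q k -> slack km beta / q km <= slack k beta / q k.
  have := @arg_minP _ _ _ k1 (fun k => 0 < q k) (fun k => slack k beta / q k) qk1.
  by case=> km ? ?; exists km.
set t := slack km beta / q km.
have t_ge0 : 0 <= t by rewrite divr_ge0 ?feas ?ltW.
exists (beta + t *: d).
  move=> k; rewrite slack_shift -/(q k) subr_ge0.
  have [qk_gt0|qk_le0] := ltP 0 (q k); first by rewrite -(ler_pdivlMr _ _ qk_gt0) km_min.
  by apply: le_trans (feas k); apply: mulr_ge0_le0.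
have tight_tight k : tight beta k -> tight (beta + t *: d) k.
  by move=> tk; rewrite /tight slack_shift (tight_normal_mul0 Td tk) mxE mulr0 subr0.
have tight_km : tight (beta + t *: d) km.
  rewrite /tight slack_shift -/(q km) /t divfK ?subrr ?eqxx //.
  exact: lt0r_neq0.
have km_new : ~~ (normal_row km <= tight_mx beta)%MS.
  apply/negP => /submxP [z km_z]; move: qkm.
  by rewrite /q km_z -mulmxA Td mulmx0 mxE ltxx.
have [rank_le rank_eq] := mxrank_leqif_sup (tight_mx_sub tight_tight).
rewrite ltn_neqAle rank_le andbT rank_eq; apply: contra km_new => sub'.
exact: submx_trans (tight_normal_sub tight_km) sub'.
Qed.

Lemma exists_vertex beta : feasible beta ->
  exists2 beta0, feasible beta0 & \rank (tight_mx beta0) = p.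
Proof.
have [m] := ubnP (p - \rank (tight_mx beta)); elim: m beta => // m IH b lt_m fb.
have [rank_lt|rank_ge] := ltnP (\rank (tight_mx b)) p; last first.
  by exists b => //; apply/eqP; rewrite eqn_leq rank_leq_col.
have [b' fb' lt_b'] := feasible_rank_step fb rank_lt.
by apply: IH fb'; have := rank_leq_col (tight_mx b'); lia.
Qed.

End SeparatingPolyhedron.

Lemma row_free_row_neq0 (F : fieldType) m n (M : 'M[F]_(m, n)) i :
  row_free M -> row i M != 0.
Proof.
by apply: contraTneq => Mi0; apply/row_freePn; exists i; rewrite Mi0 sub0mx.
Qed.

Lemma sys_mx_mulE (R : realType) n p (X : 'M[R]_(n, p)) f s (beta : 'cV[R]_p) j :
  (sys_mx X f s *m beta) j 0 =
  (X *m beta) (f ord0) 0 + sgnR R (s j) * (X *m beta) (f (lift ord0 j)) 0.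
Proof. by rewrite !mxE mulr_sumr -big_split /=; apply: eq_bigr => c _; rewrite mxE; ring. Qed.

Section BorderSystem.
Variables (R : realType) (n p : nat) (X : 'M[R]_(n, p)) (Y : 'cV[R]_n).
Variables (beta0 : 'cV[R]_p) (i1 : 'I_n).
Local Notation r := (resid X Y beta0).
Local Notation v := (sq_res X Y beta0).

(* The sign [o_e] of the BSA system, with [true] for [+]: it makes
   [r i1 + o_e r e = 0] whenever [r e ^ 2 = r i1 ^ 2]. *)
Definition border_sign (e : 'I_n) : bool := r e != r i1.

Definition border_row (e : 'I_n) : 'rV[R]_p :=
  if v e == v i1 then row i1 X + sgnR R (border_sign e) *: row e X else 0.

Definition border_mx : 'M[R]_(n, p) := \matrix_(e, c) border_row e 0 c.

Lemma row_border_mx e : row e border_mx = border_row e.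
Proof. by apply/rowP => c; rewrite !mxE. Qed.

Lemma border_sign_eq e : v e = v i1 -> r i1 + sgnR R (border_sign e) * r e = 0.
Proof.
rewrite /border_sign /sgnR /sq_res => /eqP; rewrite eqf_sqr.
have [->|_] /= := eqVneq (r e) (r i1); first by rewrite mulN1r subrr.
by move=> /eqP ->; rewrite mul1r addrN.
Qed.

Hypothesis i1_first : forall e, v e = v i1 -> (i1 <= e)%N.

Lemma exists_border_rows : \rank border_mx = p -> exists s : seq 'I_n,
  [/\ size s = p, sorted ltn (map val s),
      all (fun e : 'I_n => (i1 < e)%N && (v e == v i1)) s
    & \rank (\matrix_(j < p, c < p) border_row (nth i1 s j) 0 c) = p].
Proof.
move=> rank_p; set mrf := maxrankfun border_mx.
have free := maxrowsub_free border_mx.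
have mrf_ok i : (i1 < mrf i)%N && (v (mrf i) == v i1).
  have := row_free_row_neq0 i free; rewrite row_rowsub row_border_mx /border_row.
  case: ifP => [/eqP lvl nz|_]; last by rewrite eqxx.
  rewrite andbT ltn_neqAle i1_first // andbT.
  apply: contraNneq nz => /val_inj eq_i.
  by rewrite -eq_i /border_sign eqxx /sgnR /= scaleN1r subrr.
set B := [set mrf i | i : 'I_(\rank border_mx)].
have cardB : #|B| = p by rewrite card_imset ?card_ord //; exact: maxrankfun_inj.
exists (sort (fun x y : 'I_n => (x <= y)%N) (enum B)).
set s := sort _ _.
have mem_s e : (e \in s) = (e \in B) by rewrite mem_sort mem_enum.
have size_s : size s = p by rewrite size_sort -cardE cardB.
split => //.
- rewrite ltn_sorted_uniq_leq (map_inj_uniq val_inj) sort_uniq enum_uniq /=.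
  by rewrite sorted_map; apply: sort_sorted => x y; exact: leq_total.
- by apply/allP => e; rewrite mem_s => /imsetP[i _ ->].
set M := \matrix_(j < p, c < p) border_row (nth i1 s j) 0 c.
have sub : (rowsub mrf border_mx <= M)%MS.
  apply/row_subP => i; rewrite row_rowsub row_border_mx.
  have mrf_s : mrf i \in s by rewrite mem_s imset_f.
  have lt_i : (index (mrf i) s < p)%N by rewrite -[X in (_ < X)%N]size_s index_mem.
  have -> : border_row (mrf i) = row (Ordinal lt_i) M.
    by apply/rowP => c; rewrite !mxE /= nth_index.
  exact: row_sub.
move/eqP: free => rank_sub; apply/eqP; rewrite eqn_leq rank_leq_col.
by rewrite -{1}rank_p -rank_sub mxrankS.
Qed.

Lemma bsa_item_of_border : \rank border_mx = p ->
  exists2 it, it \in bsa_items n p &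
    [/\ it.1 ord0 = i1, sys_mx X it.1 it.2 \in unitmx
      & invmx (sys_mx X it.1 it.2) *m sys_rhs Y it.1 it.2 = beta0].
Proof.
case/exists_border_rows=> s [size_s sorted_s /allP s_ok rank_s].
have nth_ok j : (j < p)%N -> (i1 < nth i1 s j)%N && (v (nth i1 s j) == v i1).
  by move=> jp; apply: s_ok; rewrite mem_nth ?size_s.
have nth_incr j1 j2 : (j1 < j2 < p)%N -> (nth i1 s j1 < nth i1 s j2)%N.
  case/andP=> lt12 lt2; have lt1 := ltn_trans lt12 lt2.
  have := sorted_ltn_nth ltn_trans 0%N sorted_s; rewrite size_map size_s.
  by move=> /(_ j1 j2 lt1 lt2 lt12); rewrite !(nth_map i1) ?size_s.
pose f : {ffun 'I_p.+1 -> 'I_n} :=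
  [ffun t => if unlift ord0 t is Some j then nth i1 s j else i1].
pose sg : {ffun 'I_p -> bool} := [ffun j : 'I_p => border_sign (nth i1 s j)].
have f0 : f ord0 = i1 by rewrite ffunE unlift_none.
have f_lift j : f (lift ord0 j) = nth i1 s j by rewrite ffunE liftK.
have sysE : sys_mx X f sg = \matrix_(j < p, c < p) border_row (nth i1 s j) 0 c.
  apply/matrixP => j c; rewrite !mxE f0 f_lift ffunE /border_row.
  by case/andP: (nth_ok j (ltn_ord j)) => _ ->; rewrite !mxE.
have unit_sys : sys_mx X f sg \in unitmx by rewrite -row_free_unit /row_free sysE rank_s.
have solve : sys_mx X f sg *m beta0 = sys_rhs Y f sg.
  apply/colP => j; rewrite sys_mx_mulE [RHS]mxE f0 f_lift ffunE.
  have /andP[_ /eqP lvl] := nth_ok j (ltn_ord j).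
  by move: (border_sign_eq lvl); rewrite /resid; case: border_sign; rewrite /sgnR /=; lra.
exists (f, sg); last by split; rewrite // -solve mulKmx.
rewrite /bsa_items; apply: allpairs_f; last exact: mem_enum.
rewrite mem_filter mem_enum andbT; apply/forallP => x; apply/forallP => y; apply/implyP.
case: (unliftP ord0 x) => [j1 ->|->]; case: (unliftP ord0 y) => [j2 ->|->];
  rewrite ?f_lift ?f0 ?lift0 //.
- by rewrite ltnS => lt12; apply: nth_incr; rewrite lt12 ltn_ord.
- by move=> _; case/andP: (nth_ok _ (ltn_ord j2)).
Qed.

End BorderSystem.

Section VertexBorder.
Variables (R : realType) (n p : nat) (X : 'M[R]_(n, p)) (Y : 'cV[R]_n).
Variables (w : {ffun 'I_n -> bool}) (eps : 'I_n -> R).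
Hypothesis eps_sign : forall j, eps j = 1 \/ eps j = -1.
Variables (beta0 : 'cV[R]_p) (i1 : 'I_n).
Local Notation v := (sq_res X Y beta0).
Local Notation bsign := (border_sign X Y beta0 i1).
Local Notation brow := (border_row X Y beta0 i1).

(* Both endpoints of a tight constraint lie on the level of [i1], so its normal
   combines two border rows; [r i1 != 0] forces the matching signs. *)
Lemma tight_mx_sub_border : resid X Y beta0 i1 != 0 ->
  (forall k, tight X Y w eps beta0 k -> v k.1.1 = v i1) ->
  (tight_mx X Y w eps beta0 <= border_mx X Y beta0 i1)%MS.
Proof.
move=> r1_neq0 tight_lvl; apply/row_subP => i; rewrite row_tight_mx.
case: ifP => [tk|_]; last exact: sub0mx.
move: tk; set k := enum_val i => tk.
have lvl_a := tight_lvl k tk.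
have lvl_j : v k.1.2 = v i1 by rewrite -(tight_sq_res eps_sign tk).
have decomp : normal_row X w eps k =
    (eps k.1.2 * sgnR R (bsign k.1.2)) *: brow k.1.2
    + (- (sgnR R k.2 * sgnR R (bsign k.1.1))) *: brow k.1.1.
  have ka := border_sign_eq lvl_a; have kj := border_sign_eq lvl_j.
  have r1_cases : resid X Y beta0 i1 < 0 \/ 0 < resid X Y beta0 i1.
    by move: r1_neq0; rewrite neq_lt => /orP[]; [left|right].
  move: (tk); rewrite /tight /slack /normal_row /border_row (tight_active tk).
  rewrite lvl_a lvl_j eqxx => /eqP slack0; apply/rowP => c; rewrite !mxE.
  move: ka kj slack0; case: (eps_sign k.1.2) => ->; case: (bsign k.1.2);
    case: (bsign k.1.1); case: k.2; rewrite /sgnR /= => ka kj slack0; lra.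
rewrite decomp; apply: addmx_sub; apply: scalemx_sub;
  rewrite -row_border_mx; exact: row_sub.
Qed.

End VertexBorder.

Section BorderScanning.
Variables (R : realType) (n p h : nat) (X : 'M[R]_(n, p)) (Y : 'cV[R]_n).
Hypotheses (h_lt_n : (h < n)%N) (h_gt0 : (0 < h)%N) (p_gt0 : (0 < p)%N).
Hypothesis positive_sq : A2 h X Y.
Local Notation wT := {ffun 'I_n -> bool}.

Lemma bsa_visits (w : wT) beta1 : inQ h w -> X^T *m Wmx R w *m X \in unitmx ->
  separates (sq_res X Y beta1) (supp w) ->
  exists2 it, it \in bsa_items n p & forall st, state_le X Y (bsa_step h X Y st it) w.
Proof.
move=> wQ fullW sep1.
pose eps j : R := if 0 <= resid X Y beta1 j then 1 else -1.
have eps_sign j : eps j = 1 \/ eps j = -1 by rewrite /eps; case: ifP; [left|right].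
have [w_in w_out] := inQ_in_out h_lt_n h_gt0 wQ.
have [beta0 feas0 rank0] :=
  exists_vertex eps_sign w_in w_out fullW (feasible_at (fun j => erefl) sep1).
have [k tk] : exists k, tight X Y w eps beta0 k by apply: exists_tight; rewrite rank0.
set v := sq_res X Y beta0.
have cardw : #|supp w| = h by apply/eqP; rewrite -inQE.
have /andP[wa wj] := tight_active tk.
have sep0 := feasible_separates eps_sign feas0.
have [stat_h stat_h1] := order_stat_tie h_lt_n h_gt0 cardw sep0 (a := k.1.1) (j := k.1.2)
  ltac:(by rewrite inE) ltac:(by rewrite inE) (tight_sq_res eps_sign tk).
rewrite -/v in stat_h stat_h1.
have [i1 i1_lvl i1_first] : exists2 i1, v i1 = v k.1.1 &
    forall e, v e = v k.1.1 -> (i1 <= e)%N.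
  have := @arg_minP _ _ _ k.1.1 (fun e => v e == v k.1.1) val (eqxx _).
  by case=> i1 /eqP ? i1_min; exists i1 => // e /eqP /i1_min.
have r1_neq0 : resid X Y beta0 i1 != 0.
  apply: contraTneq (positive_sq beta0) => r1_0.
  by rewrite ord_sq_resE stat_h -i1_lvl /v /sq_res r1_0 expr0n ltxx.
have rank_border : \rank (border_mx X Y beta0 i1) = p.
  apply/eqP; rewrite eqn_leq rank_leq_col -{1}rank0 mxrankS //.
  apply: (@tight_mx_sub_border _ _ _ X Y w eps eps_sign beta0 i1 r1_neq0) => k' tk'.
  by rewrite (tight_same_level eps_sign feas0 tk' tk); apply/esym.
have i1_first' e : v e = v i1 -> (i1 <= e)%N by rewrite i1_lvl; exact: i1_first.
have [[f s] it_in [/= f0 unit_sys sol]] := bsa_item_of_border i1_first' rank_border.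
exists (f, s) => // st; apply: (bsa_step_visit _ unit_sys sol).
- by rewrite f0 ord_sq_resE stat_h.
- by rewrite !ord_sq_resE stat_h stat_h1.
- by apply: (Zrel_separates h_lt_n h_gt0 wQ).
Qed.

End BorderScanning.

Theorem theorem2 (R : realType) (n p h : nat) (X : 'M[R]_(n, p)) (Y : 'cV[R]_n) :
  (p < n)%N -> (1 <= p)%N -> (p <= h)%N -> (h < n)%N ->
  A1 X -> A2 h X Y -> A3 X -> A4 h X ->
  exists betahat : 'cV[R]_p,
    bsa_output h X Y = Some betahat /\
    forall beta : 'cV[R]_p, OF h X Y betahat <= OF h X Y beta.
Proof.
move=> _ p_gt0 le_ph h_lt_n _ positive_sq _ fullX.
have h_gt0 : (0 < h)%N := leq_trans p_gt0 le_ph.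
have [ws wsQ ws_min] := exists_J_argmin X Y h_lt_n h_gt0.
have sep := J_argmin_separates h_lt_n h_gt0 fullX wsQ ws_min.
have [wm [wmin_eq wmQ wm_le]] :=
  bsa_wmin_le (bsa_visits h_lt_n h_gt0 p_gt0 positive_sq wsQ (fullX _ wsQ) sep).
exists (beta_of X Y wm); split => [|beta]; first by rewrite /bsa_output wmin_eq.
have [wb wbQ wb_le] := exists_J_le_OF Y h_lt_n h_gt0 fullX beta.
apply: le_trans (OF_beta_of_le_J X Y h_lt_n h_gt0 wmQ) _.
exact: le_trans wm_le (le_trans (ws_min wb wbQ) wb_le).
Qed.
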